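(* Let $G=\mathbb{Z}_2\times\mathbb{Z}_2$, $\mathcal{L}=\{0,1,2\}$, and $L:G\to\mathcal{L}$ defined by $L((0,0))=0$, $L((0,1))=1$, $L((1,0))=L((1,1))=2$. Then $L$ is friendly.
   Context: For $m\ge3$ let $Z_m=\{(g_1,\dots,g_m)\in G^m: g_1+\cdots+g_{m-1}=g_m\}$, let $\widetilde{L}:Z_m\to\mathcal{L}^m$ be $\widetilde L(g_1,\dots,g_m)=(L(g_1),\dots,L(g_m))$, and let $\pi_i:G^m\to G$ be the $i$-th coordinate projection. $L$ is called $m$-friendly if for every $l=(l_1,\dots,l_m)\in\widetilde{L}(Z_m)$ and every $i=1,\dots,m$ one has $\pi_i(\widetilde{L}^{-1}(l))=L^{-1}(l_i)$. $L$ is friendly if it is $m$-friendly for all $m\ge3$. *)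

From HB Require Import structures.
From mathcomp Require Import all_boot all_order all_algebra.
Set Implicit Arguments. Unset Strict Implicit. Unset Printing Implicit Defensive.
Import GRing.Theory.
Local Open Scope ring_scope.

(* Z_m : tuples (g_0,...,g_{m-1}) with g_0 + ... + g_{m-2} = g_{m-1}
   (0-based indexing of the paper's g_1,...,g_m). *)
Definition inZ (G : zmodType) (m : nat) (g : 'I_m -> G) : Prop :=
  forall j : 'I_m, nat_of_ord j = m.-1 ->
    \sum_(i < m | (i.+1 < m)%N) g i = g j.

Definition Ltilde_eq (G : zmodType) (Lab : Type) (L : G -> Lab) (m : nat)
  (g : 'I_m -> G) (l : 'I_m -> Lab) : Prop := forall k, L (g k) = l k.

(* m-friendly: for every l in Ltilde(Z_m) and every i,
   pi_i (Ltilde^{-1}(l)) = L^{-1}(l_i) (as subsets of G). *)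
Definition m_friendly (G : zmodType) (Lab : Type) (L : G -> Lab) (m : nat) : Prop :=
  forall l : 'I_m -> Lab,
    (exists g : 'I_m -> G, inZ g /\ Ltilde_eq L g l) ->
    forall (i : 'I_m) (x : G),
      (exists g : 'I_m -> G, [/\ inZ g, Ltilde_eq L g l & g i = x]) <-> L x = l i.

Definition friendly (G : zmodType) (Lab : Type) (L : G -> Lab) : Prop :=
  forall m : nat, (3 <= m)%N -> m_friendly L m.

Definition G4 := ('Z_2 * 'Z_2)%type.
Definition L4 (x : G4) : 'I_3 :=
  if x.1 == 0 then (if x.2 == 0 then inord 0 else inord 1) else inord 2.

From mathcomp Require Import all_boot all_order all_algebra.
Import GRing.Theory.
Local Open Scope ring_scope.

(* In an elementary abelian 2-group the defining relation of Z_m is just that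
   all m coordinates sum to 0.  The only nontrivial fibre of L4 is the coset
   {(1,0), (1,1)} of d = (0,1), so the only way to change a coordinate of a
   point of Z_m inside its fibre is to add d.  If g_i has first coordinate 1,
   the first coordinates summing to 0 force some other g_j with first
   coordinate 1; adding d to both g_i and g_j preserves every label and the
   total sum. *)

Lemma sum_nonzero_other {G : zmodType} {I : finType} (z : I -> G) (i : I) :
  \sum_k z k = 0 -> z i != 0 -> exists2 j, j != i & z j != 0.
Proof.
move=> sum0 zi_neq0; apply/exists_inP; apply: contraNT zi_neq0.
move=> /exists_inPn others0; rewrite -sum0 (bigD1 i) //= big1 ?addr0 //.
by move=> k /others0; rewrite negbK => /eqP.
Qed.

Definition add_at2 {G : zmodType} {I : eqType} (g : I -> G) (i j : I) (d : G) :=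
  fun k => if (k == i) || (k == j) then g k + d else g k.

Lemma sum_add_at2 {G : zmodType} {I : finType} (g : I -> G) (i j : I) (d : G) :
  j != i -> d + d = 0 -> \sum_k add_at2 g i j d k = \sum_k g k.
Proof.
move=> ji dd.
have shift k : add_at2 g i j d k = g k + (if (k == i) || (k == j) then d else 0).
  by rewrite /add_at2; case: ifP; rewrite ?addr0.
have shifts0 : \sum_k (if (k == i) || (k == j) then d else 0) = 0.
  rewrite (bigD1 i) //= eqxx (bigD1 j) //= eqxx orbT big1 ?addr0 // => k.
  by case/andP=> kj ki; rewrite (negbTE ki) (negbTE kj).
by under eq_bigr => k _ do rewrite shift; rewrite big_split /= shifts0 addr0.
Qed.

Lemma inZ_sum0 {G : zmodType} {m : nat} (g : 'I_m -> G) :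
  (forall x : G, x + x = 0) -> (0 < m)%N -> inZ g <-> \sum_k g k = 0.
Proof.
move=> addxx m_gt0; have last_lt : (m.-1 < m)%N by rewrite prednK.
set last := Ordinal last_lt.
have -> : \sum_k g k = g last + \sum_(k < m | (k.+1 < m)%N) g k.
  rewrite (bigD1 last) //=; congr (_ + _); apply: eq_bigl => k.
  rewrite -(inj_eq val_inj) /= -ltn_predRL ltn_neqAle.
  by rewrite -ltnS prednK // ltn_ord andbT.
split=> [inZg | sum0 j j_last].
- by rewrite (inZg last) ?addxx.
- have -> : j = last by apply: val_inj.
  by apply: (addrI (g last)); rewrite sum0 addxx.
Qed.

Lemma G4_addxx (x : G4) : x + x = 0.
Proof. by move: x => [[[|[|n]] ?] [[|[|k]] ?]] //; apply/eqP. Qed.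

Definition d4 : G4 := (0, 1).

Lemma L4_fibre {x y : G4} : L4 x = L4 y -> x = y \/ (x.1 != 0 /\ y = x + d4).
Proof.
move: x y => [[[|[|n]] ?] [[|[|k]] ?]] [[[|[|n']] ?] [[|[|k']] ?]] //=;
rewrite /L4 /=; try (by left; apply/eqP); try (by right; split; apply/eqP);
move/(congr1 val); rewrite /= !inordK //.
Qed.

Lemma L4_add_d4 (x : G4) : x.1 != 0 -> L4 (x + d4) = L4 x.
Proof. by move: x => [[[|[|n]] ?] [[|[|k]] ?]]. Qed.

Lemma sum_fst {I : finType} (g : I -> G4) : (\sum_k g k).1 = \sum_k (g k).1.
Proof. exact: (big_morph fst). Qed.

Theorem mainTheorem4 : friendly L4.
Proof.
move=> m m_ge3 l [g [inZg Lg]] i x; split=> [[g' [_ Lg' <-]] | Lx].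
  exact: Lg'.
have m_gt0 : (0 < m)%N by apply: leq_trans m_ge3.
have sum0 : \sum_k g k = 0 := (inZ_sum0 g G4_addxx m_gt0).1 inZg.
have Lgi : L4 (g i) = L4 x by rewrite Lx Lg.
have [<- | [gi1 ->]] := L4_fibre Lgi; first by exists g.
have [j ji gj1] : exists2 j, j != i & (g j).1 != 0.
  by apply: (sum_nonzero_other (fun k => (g k).1) i _ gi1); rewrite -sum_fst sum0.
exists (add_at2 g i j d4); split.
- by apply/(inZ_sum0 _ G4_addxx m_gt0).2; rewrite sum_add_at2 ?G4_addxx.
- move=> k; rewrite -Lg /add_at2.
  by case: ifP => // /orP[] /eqP ->; apply: L4_add_d4.
- by rewrite /add_at2 eqxx.
Qed.
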